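(* Suppose that $X$ is a compact Hausdorff space such that every continuous image of $X$ of weight at most $2^{\aleph_0}$ is Fréchet. Then $X$ is Fréchet.
   Context: A space $X$ is Fréchet (Fréchet–Urysohn) if whenever $Z\subseteq X$ and $x$ is in the closure of $Z$ (an accumulation point of $Z$), there is a sequence $(z_n)_{n\in\mathbb N}$ in $Z$ converging to $x$. The weight of a space is the least cardinality of a base. *)

From HB Require Import structures.
From mathcomp Require Import all_boot all_order all_algebra.
From mathcomp Require Import all_classical all_reals all_analysis.
Set Implicit Arguments. Unset Strict Implicit. Unset Printing Implicit Defensive.
Local Open Scope classical_set_scope.

Definition frechet (X : topologicalType) : Prop :=
  forall (Z : set X) (x : X), closure Z x ->
    exists u : nat -> X, (forall n, Z (u n)) /\ u @ \oo --> x.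

Definition is_base (Y : topologicalType) (B : set (set Y)) : Prop :=
  (forall b, B b -> open b) /\
  (forall (U : set Y) (y : Y), open U -> U y -> exists2 b, B b & b y /\ b `<=` U).

Definition weight_le_continuum (Y : topologicalType) : Prop :=
  exists2 B : set (set Y), is_base B & card_le B [set: set nat].

From HB Require Import structures.
From mathcomp Require Import all_boot all_order all_algebra.
From mathcomp Require Import all_classical all_reals all_analysis.
From mathcomp Require Import Rstruct Rstruct_topology lra.
Set Implicit Arguments. Unset Strict Implicit. Unset Printing Implicit Defensive.
Import Order.TTheory GRing.Theory Num.Theory numFieldNormedType.Exports.
Local Open Scope classical_set_scope.
Local Open Scope ring_scope.

(* Let x lie in the closure of Z while no sequence of Z converges to x.  Fix
   two choice functions: [sep u], a Urysohn function vanishing at x and equal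
   to 1 infinitely often along a sequence u that does not converge to x, and
   [pick S], a point of Z lying in S whenever S meets Z.  The continuous
   functions and points of Z obtained by closing under [sep] and [pick] are
   indexed by well-founded countably branching trees labelled in nat^nat, so
   there are at most 2^aleph_0 of them.  Evaluating the functions maps X onto
   a Hausdorff subspace Y of a product of at most 2^aleph_0 real lines, which
   has weight at most 2^aleph_0 and is therefore Frechet.  Closure under
   [pick] puts the image of x in the closure of the image of the picked
   points, so some sequence u of picked points converges to x in Y; but
   [sep u] is one of the coordinates of Y, and it separates u from x. *)

Section RationalBoxes.
Variable R : realType.

Definition in_rat_ball (qr : rat * rat) (t : R) : bool := `|t - ratr qr.1| < ratr qr.2.

Lemma rat_ball_within (t eps : R) : 0 < eps ->
  exists qr, in_rat_ball qr t /\ forall s, in_rat_ball qr s -> `|s - t| < eps.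
Proof.
move=> eps_gt0; have /rat_in_itvoo[r] : 0 < eps / 2 by rewrite divr_gt0.
rewrite in_itv /= => /andP[r_gt0 r_lt].
have /rat_in_itvoo[q] : t - ratr r < t + ratr r by lra.
rewrite in_itv /= => /andP[tq qt].
exists (q, r); split=> [|s]; rewrite /in_rat_ball /= !ltr_norml.
- by apply/andP; split; lra.
- by move=> /andP[? ?]; apply/andP; split; lra.
Qed.

Definition box (I : Type) := seq (I * (rat * rat)).

HB.instance Definition _ (I : choiceType) := Choice.on (box I).
HB.instance Definition _ (I : choiceType) := isPointed.Build (box I) [::].

Definition in_box (I : Type) (s : box I) (p : I -> R) : bool :=
  all (fun b => in_rat_ball b.2 (p b.1)) s.

Lemma in_box_map (I J : Type) (f : I -> J) (s : box I) (p : J -> R) :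
  in_box [seq (f b.1, b.2) | b <- s] p = in_box s (p \o f).
Proof. by rewrite /in_box all_map. Qed.

Lemma open_in_box (I : Type) (T : topologicalType) (F : I -> T -> R)
    (s : box I) :
  (forall i, continuous (F i)) -> open [set t | in_box s (F^~ t)].
Proof.
move=> Fcont; elim: s => [|[i qr] s IHs].
  by rewrite (_ : [set _ | _] = setT); [exact: openT|apply/seteqP].
have -> : [set t | in_box ((i, qr) :: s) (F^~ t)] =
    (F i) @^-1` [set y | in_rat_ball qr y] `&` [set t | in_box s (F^~ t)].
  by apply/seteqP; split=> t /= /andP.
apply: openI IHs; apply: (proj1 (continuousP _) (Fcont i)).
have -> : [set y | in_rat_ball qr y] =
    `](ratr qr.1 - ratr qr.2), (ratr qr.1 + ratr qr.2)[%classic.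
  by apply/seteqP; split=> y; rewrite /= in_itv /= /in_rat_ball ltr_distl.
exact: interval_open.
Qed.

End RationalBoxes.

Section WeakImage.
Variables (R : realType) (I : choiceType) (X : Type) (e : X -> I -> R).

Definition weak_image := {p : I -> R | exists x, e x = p}.

HB.instance Definition _ := gen_eqMixin weak_image.
HB.instance Definition _ := gen_choiceMixin weak_image.

Definition box_set (s : box I) : set weak_image := [set p | in_box s (sval p)].

Lemma box_set_cover : \bigcup_(s in [set: box I]) box_set s = setT.
Proof. by apply/seteqP; split=> // p _; exists [::]. Qed.

Lemma box_set_join s1 s2 p : [set: box I] s1 -> [set: box I] s2 ->
  box_set s1 p -> box_set s2 p ->
  exists s, [/\ [set: box I] s, box_set s p &
               box_set s `<=` box_set s1 `&` box_set s2].
Proof.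
move=> _ _ p1 p2; exists (s1 ++ s2); split=> //.
  by rewrite /box_set /= /in_box all_cat; apply/andP.
by move=> q; rewrite /box_set /= /in_box all_cat => /andP.
Qed.

HB.instance Definition _ :=
  isBaseTopological.Build weak_image box_set_cover box_set_join.

Lemma open_box_set s : open (box_set s).
Proof. by exists [set s] => //; apply/seteqP; split=> p; [case=> ? -> | exists s]. Qed.

Lemma weak_image_openP (U : set weak_image) p :
  open U -> U p -> exists2 s, box_set s p & box_set s `<=` U.
Proof. by move=> [D _ <-] [s Ds ps]; exists s => // q qs; exists s. Qed.

Lemma continuous_weak_image (T : topologicalType) (f : T -> weak_image) :
  (forall i, continuous (fun t => sval (f t) i)) -> continuous f.
Proof.
move=> fcont; apply/continuousP => _ [D _ <-]; rewrite preimage_bigcup.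
by apply: bigcup_open => s _; exact: (open_in_box s fcont).
Qed.

Lemma weak_image_hausdorff : hausdorff_space weak_image.
Proof.
rewrite open_hausdorff => -[p ep] [q eq] /eqP pq.
have [i pqi] : exists i, p i != q i.
  apply: contrapT => /forallNP pq_eq; apply: pq; apply: eq_exist.
  by apply/funext => i; apply/eqP/negPn/negP/pq_eq.
have d_gt0 : 0 < `|p i - q i| / 2 by rewrite divr_gt0 // normr_gt0 subr_eq0.
have [qr1 [pqr1 qr1_near]] := rat_ball_within (p i) d_gt0.
have [qr2 [qqr2 qr2_near]] := rat_ball_within (q i) d_gt0.
exists (box_set [:: (i, qr1)], box_set [:: (i, qr2)]).
  by split; rewrite inE /box_set /in_box /= andbT.
split; [exact: open_box_set | exact: open_box_set |].
apply/eqP; rewrite -subset0 => r [].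
rewrite /box_set /in_box /= !andbT => /qr1_near r1 /qr2_near r2.
have := ler_distD (sval r i) (p i) (q i); rewrite distrC in r1; lra.
Qed.

Lemma weak_image_weight :
  ([set: box I] #<= [set: set nat])%card -> weight_le_continuum weak_image.
Proof.
move=> box_le; exists (box_set @` setT).
  split=> [_ [s _ <-]|U p oU Up]; first exact: open_box_set.
  by have [s ps sU] := weak_image_openP oU Up; exists (box_set s) => //; exists s.
exact: card_le_trans (card_image_le _ _) box_le.
Qed.

Definition weak_proj (x : X) : weak_image := exist _ (e x) (ex_intro _ x erefl).

Lemma weak_proj_surj (p : weak_image) : exists x, weak_proj x = p.
Proof. by case: p => p [x ex]; exists x; apply: eq_exist. Qed.

End WeakImage.

Inductive code := Leaf | Node of (nat -> nat) & (nat -> code).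

HB.instance Definition _ := gen_eqMixin code.
HB.instance Definition _ := gen_choiceMixin code.

Fixpoint code_graph (c : code) (t : seq nat * option (nat * nat)) : Prop :=
  match c, t with
  | Leaf, ([::], o) => o = None
  | Node a _, ([::], o) => exists k, o = Some (k, a k)
  | Leaf, (_ :: _, _) => False
  | Node _ ch, (j :: p, o) => code_graph (ch j) (p, o)
  end.

Lemma code_graph_inj : injective code_graph.
Proof.
elim=> [|a ch IHch] [|a' ch'] E //.
- by have [k] : code_graph (Node a' ch') ([::], None) by rewrite -E.
- by have [k] : code_graph (Node a ch) ([::], None) by rewrite E.
have -> : a = a'.
  apply/funext => k.
  have [k' [-> ->]] : code_graph (Node a' ch') ([::], Some (k, a k)).
    by rewrite -E; exists k.
  by [].
congr Node; apply/funext => j; apply: IHch; apply/funext => -[p o].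
exact: (congr1 (@^~ (j :: p, o)) E).
Qed.

Definition code_set (c : code) : set nat := pickle @` code_graph c.

Lemma code_set_inj : injective code_set.
Proof.
move=> c1 c2 E; apply: code_graph_inj; apply/funext => t.
have := congr1 (@^~ (pickle t)) E.
by rewrite /code_set !(image_inj (pcan_inj pickleK)).
Qed.

Definition box_label (s : box code) (m : nat) : nat :=
  match m with 0 => 1 | 1 => size s | i.+2 => pickle (nth (Leaf, (0, 0)) s i).2 end.

Definition box_child (s : box code) (i : nat) : code := (nth (Leaf, (0, 0)) s i).1.

Definition box_code (s : box code) : code := Node (box_label s) (box_child s).

Definition label_box (a : nat -> nat) : box nat :=
  [seq (i, odflt (0, 0) (unpickle (a i.+2))) | i <- iota 0 (a 1)].

Lemma label_boxK s : [seq (box_child s b.1, b.2) | b <- label_box (box_label s)] = s.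
Proof.
rewrite -map_comp -[RHS](mkseq_nth (Leaf, (0, 0))); apply: eq_map => i.
by rewrite /comp pickleK /box_child; case: nth.
Qed.

Lemma box_code_inj : injective box_code.
Proof. by move=> s1 s2 [E1 E2]; rewrite -[s1]label_boxK E1 E2 label_boxK. Qed.

Lemma card_box_code : ([set: box code] #<= [set: set nat])%card.
Proof.
apply/pcard_injP; exists (code_set \o box_code).
by move=> s1 s2 _ _ /code_set_inj/box_code_inj.
Qed.

Section Interpretation.
Variables (R : realType) (X : topologicalType).
Variables (sep : (nat -> X) -> X -> R) (pick : set X -> X).

(* A node whose label a has [a 0 = 0] applies [sep] to the points of its
   children; any other node picks a point in the box of [label_box a], which
   constrains the functions of its first [a 1] children. *)
Fixpoint interp (c : code) : (X -> R) * X :=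
  match c with
  | Leaf => (fun _ => 0, pick setT)
  | Node a ch =>
    if a 0 == 0 then (sep (fun n => (interp (ch n)).2), pick setT)
    else (fun _ => 0,
          pick [set z | in_box (label_box a) (fun i => (interp (ch i)).1 z)])
  end.

Lemma interp_box_code s :
  (interp (box_code s)).2 = pick [set z | in_box s (fun c => (interp c).1 z)].
Proof.
rewrite [LHS]/= -[in RHS](label_boxK s); congr pick.
by apply/seteqP; split=> z; rewrite /mkset in_box_map.
Qed.

Lemma interp_picked c : exists S, (interp c).2 = pick S.
Proof. by case: c => [|a ch] /=; [|case: ifP]; eexists. Qed.

Hypothesis sep_continuous : forall u, continuous (sep u).

Lemma continuous_interp c : continuous (interp c).1.
Proof.
case: c => [|a ch] /=; last case: ifP => _ //=.
all: by move=> ?; exact: cvg_cst.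
Qed.

End Interpretation.

Lemma not_cvg_open_nbhs (T : topologicalType) (F : set_system T) {FF : Filter F}
    (x : T) :
  ~ (F --> x) -> exists2 U, open_nbhs x U & ~ F U.
Proof.
move=> Fx; apply: contrapT => noU; apply: Fx => B; rewrite nbhsE => -[U xU UB].
by apply: filterS UB _; apply: contrapT => FU; apply: noU; exists U.
Qed.

Section CompactHausdorff.
Variables (R : realType) (X : topologicalType).
Hypotheses (X_compact : compact [set: X]) (X_hausdorff : hausdorff_space X).

Lemma compact_urysohn (x : X) (U : set X) : open_nbhs x U ->
  exists g : X -> R, [/\ continuous g, g x = 0 & forall y, ~ U y -> g y = 1].
Proof.
move=> [oU Ux].
have X_creg : completely_regular_space X := @normal_completely_regular R X
  (compact_normal X_hausdorff X_compact) (hausdorff_accessible X_hausdorff).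
have [g [g_cont _ g0 g1]] := (@uniform_separatorP X R _ _).1
  (X_creg x (~` U) (open_closedC oU) (fun nUx => nUx Ux)).
exists g; split=> //; first exact: (g0 (g x) (ex_intro2 _ _ x erefl erefl)).
by move=> y nUy; exact: (g1 (g y) (ex_intro2 _ _ y nUy erefl)).
Qed.

Lemma compact_not_cvg_separator (F : set_system X) {FF : Filter F} (x : X) :
  ~ (F --> x) -> exists g : X -> R,
    [/\ continuous g, g x = 0 & ~ F [set y | `|g y| < 1]].
Proof.
move=> /not_cvg_open_nbhs[U xU notFU].
have [g [g_cont gx gU]] := compact_urysohn xU.
exists g; split=> // Fg; apply: notFU; apply: filterS Fg => y /= gy.
by apply: contrapT => /gU gy1; move: gy; rewrite gy1 normr1 ltxx.
Qed.

End CompactHausdorff.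

Section SequenceFromImage.
Variables (R : realType) (X : topologicalType) (Z : set X) (x : X).
Variables (sep : (nat -> X) -> X -> R) (pick : set X -> X).
Hypothesis x_closure : closure Z x.
Hypothesis sep_continuous : forall u, continuous (sep u).
Hypothesis sep_not_cvg : forall u, ~ (u @ \oo --> x) ->
  sep u x = 0 /\ ~ (\forall n \near \oo, `|sep u (u n)| < 1).
Hypothesis pickZ : forall S, Z (pick S).
Hypothesis pick_in : forall S, S `&` Z !=set0 -> S (pick S).

Let e (z : X) (c : code) : R := (interp sep pick c).1 z.

Lemma continuous_weak_proj_interp : continuous (weak_proj e).
Proof. by apply: continuous_weak_image => c; exact: continuous_interp. Qed.

Lemma closure_weak_proj_picked :
  closure [set weak_proj e (interp sep pick c).2 | c in setT] (weak_proj e x).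
Proof.
move=> B; rewrite nbhsE => -[U [oU Ux] UB].
have [s xs sU] := weak_image_openP oU Ux.
have [z [Zz sz]] : Z `&` [set z | in_box s (e z)] !=set0.
  apply: x_closure; apply: open_nbhs_nbhs; split; last exact: xs.
  by apply: (@open_in_box R code X (fun c z => e z c)) => c; exact: continuous_interp.
(* [box_code s] is a pick node for exactly the neighbourhood [box_set s]. *)
exists (weak_proj e (interp sep pick (box_code s)).2).
split; first by exists (box_code s).
apply/UB/sU; change (in_box s (e (interp sep pick (box_code s)).2)).
by rewrite interp_box_code; apply: (@pick_in [set z | in_box s (e z)]); exists z.
Qed.

Lemma frechet_weak_image_cvg :
  frechet (weak_image e) -> exists u : nat -> X, (forall n, Z (u n)) /\ u @ \oo --> x.
Proof.
move=> Y_frechet; have [v [v_picked v_cvg]] := Y_frechet _ _ closure_weak_proj_picked.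
have /boolp.choice[t vt] :
    forall n, exists c, v n = weak_proj e (interp sep pick c).2.
  by move=> n; have [c _ <-] := v_picked n; exists c.
pose u n := (interp sep pick (t n)).2.
have Zu n : Z (u n).
  by rewrite /u; have [S ->] := interp_picked sep pick (t n); exact: pickZ.
exists u; split=> //; apply: contrapT => /sep_not_cvg[sep_ux]; apply.
(* [sep u] is the coordinate of the weak image at the node [s]. *)
pose s := Node (fun=> 0) t.
have sx_nbhs : nbhs (weak_proj e x) (box_set [:: (s, (0, 1))]).
  apply: open_nbhs_nbhs; split; first exact: open_box_set.
  change ((`|sep u x - ratr 0| < ratr 1) && true).
  by rewrite sep_ux rmorph0 rmorph1 subr0 normr0 ltr01.
have : \forall n \near \oo, box_set [:: (s, (0, 1))] (v n) := v_cvg _ sx_nbhs.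
rewrite !nearE; apply: filterS => n; rewrite vt.
change ((`|sep u (u n) - ratr 0| < ratr 1) && true -> `|sep u (u n)| < 1).
by rewrite rmorph0 rmorph1 subr0 andbT.
Qed.

End SequenceFromImage.

Theorem proposition2p6 (X : topologicalType) :
  compact [set: X] -> hausdorff_space X ->
  (forall (Y : topologicalType) (f : X -> Y),
      hausdorff_space Y -> continuous f -> (forall y : Y, exists x, f x = y) ->
      weight_le_continuum Y -> frechet Y) ->
  frechet X.
Proof.
move=> X_compact X_hausdorff frechet_images Z x x_closure.
have /boolp.choice[sep sepP] : forall u : nat -> X, exists g : X -> Rdefinitions.R,
    continuous g /\ (~ (u @ \oo --> x) ->
                     g x = 0 /\ ~ (\forall n \near \oo, `|g (u n)| < 1)).
  move=> u; have [ux|] := pselect (u @ \oo --> x).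
    by exists (fun=> 0); split=> [|/(_ ux)//]; exact: cst_continuous.
  move=> /(compact_not_cvg_separator Rdefinitions.R X_compact X_hausdorff).
  by case=> g [? ? ?]; exists g.
have [z0 Zz0] : Z !=set0 by have [z [Zz _]] := x_closure _ filterT; exists z.
have /boolp.choice[pick pickP] :
    forall S : set X, exists z, Z z /\ (S `&` Z !=set0 -> S z).
  move=> S; have [[z [Sz Zz]]|noSZ] := pselect (S `&` Z !=set0); first by exists z.
  by exists z0; split=> // /noSZ.
have sep_continuous u := (sepP u).1.
pose e z c := (interp sep pick c).1 z.
apply: (frechet_weak_image_cvg x_closure sep_continuous (fun u => (sepP u).2)
  (fun S => (pickP S).1) (fun S => (pickP S).2)).
apply: (frechet_images _ (weak_proj e)).
- exact: weak_image_hausdorff.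
- exact: continuous_weak_proj_interp.
- exact: weak_proj_surj.
- exact: weak_image_weight card_box_code.
Qed.
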